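(* Consider $\min f(x)$ s.t. $g(x)\in K$ with $f,g$ twice continuously differentiable and $K\subseteq\mathbb{R}^m$ closed; $C:=g^{-1}(K)$. Let $d\in T_C(\bar x)$ and $\bar x$ be a local optimal solution in direction $d$ with $\nabla f(\bar x)d=0$. Then for every $\lambda\in\mathbb{R}^m$ with $\nabla_xL(\bar x,\lambda)=0$: (i) $\sigma_\Theta(\lambda)\le0$; (ii) $\nabla_{xx}^2L(\bar x,\lambda)(d,d)-\sigma_\Omega(\lambda)=\alpha\ge0$, where $\alpha:=\inf_{w\in T_C^2(\bar x;d)}\big(\nabla f(\bar x)w+\nabla^2f(\bar x)(d,d)\big)$.
   Context: $L(x,\lambda):=f(x)+\langle\lambda,g(x)\rangle$. $\Theta:=\nabla g(\bar x)\big(T_C^{''}(\bar x;d)\big)$ and $\Omega:=\nabla g(\bar x)\big(T_C^2(\bar x;d)\big)+\nabla^2g(\bar x)(d,d)$, where $\nabla^2g(\bar x)(d,d):=(d^T\nabla^2g_i(\bar x)d)_{i=1}^m$. $T_C^2(\bar x;d):=\{w\mid \exists t_k\downarrow 0,\ w_k\to w,\ \bar x+t_kd+\tfrac12 t_k^2w_k\in C\}$; $T_C^{''}(\bar x;d):=\{w\mid \exists (t_k,r_k)\downarrow(0,0),\ w_k\to w,\ t_k/r_k\to0,\ \bar x+t_kd+\tfrac12 t_kr_kw_k\in C\}$. $\sigma_S(\lambda):=\sup_{u\in S}\langle\lambda,u\rangle$, with $\sigma_\emptyset\equiv-\infty$ and $\inf\emptyset=+\infty$. $V_{\rho,\delta}(d):=\{w\in\delta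 B_{\mathbb{R}^n}\mid \|\,\|d\|w-\|w\|d\,\|\le\rho\|w\|\|d\|\}$; $\bar x\in C$ is local optimal in direction $d$ if for some $\rho,\delta>0$, $f(x)\ge f(\bar x)$ for all $x\in C\cap(\bar x+V_{\rho,\delta}(d))$. *)

From HB Require Import structures.
From mathcomp Require Import all_boot all_order all_algebra.
From mathcomp Require Import all_classical all_reals all_analysis.
Set Implicit Arguments. Unset Strict Implicit. Unset Printing Implicit Defensive.
Import Order.TTheory GRing.Theory Num.Theory.
Import numFieldNormedType.Exports.
Local Open Scope ring_scope.
Local Open Scope classical_set_scope.

Section Defs.
Variable R : realType.

Definition dotv {n} (u v : 'rV[R]_n) : R := (u *m v^T) 0 0.
Definition enorm {n} (v : 'rV[R]_n) : R := Num.sqrt (dotv v v).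

Definition qform {n} (M : 'M[R]_n) (d : 'rV[R]_n) : R := (d *m M *m d^T) 0 0.

Definition has_grad {n} (f : 'rV[R]_n -> R) (G : 'rV[R]_n) (x : 'rV[R]_n) :=
  forall eps : R, 0 < eps -> exists delta : R, 0 < delta /\
    forall y, enorm (y - x) < delta ->
      `|f y - f x - dotv G (y - x)| <= eps * enorm (y - x).

Definition has_jac {n m} (F : 'rV[R]_n -> 'rV[R]_m) (L : 'M[R]_(n, m)) (x : 'rV[R]_n) :=
  forall eps : R, 0 < eps -> exists delta : R, 0 < delta /\
    forall y, enorm (y - x) < delta ->
      enorm (F y - F x - (y - x) *m L) <= eps * enorm (y - x).

Definition C2 {n} (f : 'rV[R]_n -> R) (Df : 'rV[R]_n -> 'rV[R]_n)
  (D2f : 'rV[R]_n -> 'M[R]_n) :=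
  (forall x, has_grad f (Df x) x) /\ (forall x, has_jac Df (D2f x) x) /\
  continuous D2f.

(* g : R^n -> R^m is C^2 with Jacobian (transposed, i.e. grad g(x) w = w *m Jg x)
   and Hessians Hg i of the components g_i *)
Definition C2map {n m} (g : 'rV[R]_n -> 'rV[R]_m) (Jg : 'rV[R]_n -> 'M[R]_(n, m))
  (Hg : 'I_m -> 'rV[R]_n -> 'M[R]_n) :=
  forall i : 'I_m, C2 (fun x => g x 0 i) (fun x => (col i (Jg x))^T) (Hg i).

(* t_k decreasing to 0 in the sense t_k > 0, t_k -> 0 *)
Definition pos_to0 (t : nat -> R) := (forall k, 0 < t k) /\ t @ \oo --> (0 : R).

Definition tangent_cone {n} (C : set 'rV[R]_n) (x : 'rV[R]_n) : set 'rV[R]_n :=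
  [set d | exists (t : nat -> R) (d_ : nat -> 'rV[R]_n),
     pos_to0 t /\ d_ @ \oo --> d /\ forall k, C (x + t k *: d_ k)].

Definition tangent2 {n} (C : set 'rV[R]_n) (x d : 'rV[R]_n) : set 'rV[R]_n :=
  [set w | exists (t : nat -> R) (w_ : nat -> 'rV[R]_n),
     pos_to0 t /\ w_ @ \oo --> w /\
     forall k, C (x + t k *: d + (2^-1 * t k ^+ 2) *: w_ k)].

Definition tangent2_asym {n} (C : set 'rV[R]_n) (x d : 'rV[R]_n) : set 'rV[R]_n :=
  [set w | exists (t r : nat -> R) (w_ : nat -> 'rV[R]_n),
     pos_to0 t /\ pos_to0 r /\ (fun k => t k / r k) @ \oo --> (0 : R) /\
     w_ @ \oo --> w /\
     forall k, C (x + t k *: d + (2^-1 * t k * r k) *: w_ k)].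

(* support function, sigma_emptyset = -oo *)
Definition support_fun {m} (S : set 'rV[R]_m) (lam : 'rV[R]_m) : \bar R :=
  ereal_sup [set (dotv lam u)%:E | u in S].

Definition Vdir {n} (rho delta : R) (d : 'rV[R]_n) : set 'rV[R]_n :=
  [set w | enorm w <= delta /\
     enorm (enorm d *: w - enorm w *: d) <= rho * enorm w * enorm d].

Definition local_opt_dir {n} (f : 'rV[R]_n -> R) (C : set 'rV[R]_n) (xbar d : 'rV[R]_n) :=
  C xbar /\ exists rho delta : R, 0 < rho /\ 0 < delta /\
    forall x, C x -> Vdir rho delta d (x - xbar) -> f xbar <= f x.

End Defs.

From HB Require Import structures.
From mathcomp Require Import all_boot all_order all_algebra.
From mathcomp Require Import all_classical all_reals all_analysis.
From mathcomp Require Import ring.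
Import Order.TTheory GRing.Theory Num.Theory.
Import numFieldNormedType.Exports.
Local Open Scope ring_scope.
Local Open Scope classical_set_scope.

(* For the sequences witnessing w in T''_C(xbar;d) (where t_k/r_k -> 0) or
   w in T^2_C(xbar;d) (where r_k = t_k), put v_k := d + (r_k/2) w_k, so that
   xbar + t_k v_k lies in C.  As v_k -> d, these points eventually lie in
   xbar + V_{rho,delta}(d), hence f(xbar + t_k v_k) >= f(xbar).  Expanding f to
   second order, using grad f(xbar) d = 0 and dividing by t_k r_k / 2 gives
   0 <= grad f(xbar) w_k + (t_k/r_k) (D^2 f(xbar)(v_k,v_k) + o(1)), so that
   grad f(xbar) w + c D^2 f(xbar)(d,d) >= 0 with c = lim t_k/r_k, i.e. c = 0
   or c = 1.  Stationarity grad f(xbar) = - lam grad g(xbar) turns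
   <lam, grad g(xbar) w> into - grad f(xbar) w: case c = 0 is (i), and case
   c = 1 is alpha >= 0, which (ii) rewrites through the support function of
   Omega. *)

Set Implicit Arguments. Unset Strict Implicit.

Section InnerProduct.
Variables (R : realType) (n : nat).
Implicit Types (u v w : 'rV[R]_n) (a : R).

Lemma dotvE u v : dotv u v = \sum_j u 0 j * v 0 j.
Proof. by rewrite /dotv !mxE; apply: eq_bigr => j _; rewrite mxE. Qed.

Lemma dotvC u v : dotv u v = dotv v u.
Proof. by rewrite !dotvE; apply: eq_bigr => j _; rewrite mulrC. Qed.

Lemma dotvDl u v w : dotv (u + v) w = dotv u w + dotv v w.
Proof. by rewrite !dotvE -big_split; apply: eq_bigr => j _; rewrite mxE mulrDl. Qed.

Lemma dotvDr u v w : dotv w (u + v) = dotv w u + dotv w v.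
Proof. by rewrite dotvC dotvDl !(dotvC w). Qed.

Lemma dotvZl a u w : dotv (a *: u) w = a * dotv u w.
Proof. by rewrite !dotvE mulr_sumr; apply: eq_bigr => j _; rewrite mxE mulrA. Qed.

Lemma dotvZr a u w : dotv w (a *: u) = a * dotv w u.
Proof. by rewrite dotvC dotvZl dotvC. Qed.

Lemma dotvNl u w : dotv (- u) w = - dotv u w.
Proof. by rewrite -scaleN1r dotvZl mulN1r. Qed.

Lemma dotvBl u v w : dotv (u - v) w = dotv u w - dotv v w.
Proof. by rewrite dotvDl dotvNl. Qed.

Lemma dotvv_ge0 u : 0 <= dotv u u.
Proof. by rewrite dotvE; apply: sumr_ge0 => j _; rewrite -expr2 sqr_ge0. Qed.

Lemma dotvv_eq0 u : (dotv u u == 0) = (u == 0).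
Proof.
apply/idP/eqP => [|->]; last by rewrite dotvE big1 // => j _; rewrite mxE mul0r.
rewrite dotvE psumr_eq0 => [/allP u0|j _]; last by rewrite -expr2 sqr_ge0.
apply/rowP => j; have /implyP := u0 j (mem_index_enum j).
by rewrite -expr2 sqrf_eq0 mxE => /(_ isT)/eqP.
Qed.

Lemma dotv_mulmx m u (M : 'M[R]_(n, m)) (z : 'rV[R]_m) :
  dotv (u *m M) z = dotv u (z *m M^T).
Proof. by rewrite /dotv trmx_mul trmxK mulmxA. Qed.

Lemma qformZ (M : 'M[R]_n) a u : qform M (a *: u) = a ^+ 2 * qform M u.
Proof. by rewrite /qform -!scalemxAl linearZ /= -scalemxAr !mxE mulrA expr2. Qed.

Lemma enorm_ge0 u : 0 <= enorm u.
Proof. exact: sqrtr_ge0. Qed.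

Lemma enormZ a u : enorm (a *: u) = `|a| * enorm u.
Proof. by rewrite /enorm dotvZl dotvZr mulrA sqrtrM ?sqr_ge0 // -expr2 sqrtr_sqr. Qed.

Lemma enorm0 : enorm (0 : 'rV[R]_n) = 0.
Proof. by rewrite -(scale0r 0) enormZ normr0 mul0r. Qed.

(* Expand [0 <= dotv (s *: u + v) (s *: u + v)] at its minimiser [s = - dotv u v / dotv u u]. *)
Lemma dotv_sqr_le u v : dotv u v ^+ 2 <= dotv u u * dotv v v.
Proof.
have [->|u0] := eqVneq u 0.
  by rewrite !(dotvC 0) -(scale0r 0) !dotvZr !mul0r expr0n.
have uu_gt0 : 0 < dotv u u by rewrite lt_def dotvv_eq0 u0 dotvv_ge0.
have := dotvv_ge0 ((- (dotv u v / dotv u u)) *: u + v).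
rewrite !(dotvDl, dotvDr, dotvZl, dotvZr) (dotvC v u) => sq_ge0.
have uu_inv_gt0 : 0 < (dotv u u)^-1 by rewrite invr_gt0.
rewrite -subr_ge0 -(pmulr_rge0 _ uu_inv_gt0); apply: le_trans sq_ge0 _.
rewrite le_eqVlt; apply/orP; left; apply/eqP.
by field; rewrite gt_eqF.
Qed.

Lemma cauchy_schwarz u v : `|dotv u v| <= enorm u * enorm v.
Proof.
rewrite -(sqrtr_sqr (dotv u v)) /enorm -sqrtrM ?dotvv_ge0 //.
by rewrite ler_sqrt ?mulr_ge0 ?dotvv_ge0 // dotv_sqr_le.
Qed.

End InnerProduct.

Section SequenceLimits.
Variables (R : realType) (n : nat).
Implicit Types (v u : nat -> 'rV[R]_n) (a b : 'rV[R]_n).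

Lemma cvg_coord v a j : v @ \oo --> a -> (fun k => v k 0 j) @ \oo --> a 0 j.
Proof. exact: continuous_cvg (@coord_continuous R 1 n 0 j a). Qed.

Lemma cvg_mulmx m v a (M : 'M[R]_(n, m)) :
  v @ \oo --> a -> (fun k => v k *m M) @ \oo --> a *m M.
Proof.
move=> va; rewrite mulmx_sum_row; under eq_fun do rewrite mulmx_sum_row.
apply: cvg_big => [|i _]; first exact: add_continuous.
by apply: cvgZ; [exact: cvg_coord | exact: cvg_cst].
Qed.

Lemma cvg_dotv v u a b : v @ \oo --> a -> u @ \oo --> b ->
  (fun k => dotv (v k) (u k)) @ \oo --> dotv a b.
Proof.
move=> va ub; rewrite dotvE; under eq_fun do rewrite dotvE.
apply: cvg_big => [|j _]; first exact: add_continuous.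
by apply: cvgM; exact: cvg_coord.
Qed.

Lemma cvg_qform (M : 'M[R]_n) v a :
  v @ \oo --> a -> (fun k => qform M (v k)) @ \oo --> qform M a.
Proof. by move=> va; apply: cvg_dotv => //; exact: cvg_mulmx. Qed.

Lemma cvg_enorm v a : v @ \oo --> a -> (fun k => enorm (v k)) @ \oo --> enorm a.
Proof. by move=> va; apply: (continuous_cvg _ (@sqrt_continuous R _)); exact: cvg_dotv. Qed.

End SequenceLimits.

Section Taylor.
Variable R : realType.

Lemma is_derive_eps_delta (phi : R -> R) s L :
  (forall eps, 0 < eps -> exists2 del, 0 < del & forall u, `|u| < del ->
     `|phi (s + u) - phi s - u * L| <= eps * `|u|) ->
  is_derive s (1 : R) phi L.
Proof.
move=> phi_diff.
have quot_cvg : (fun h : R => h^-1 *: ((phi \o shift s) (h *: 1) - phi s)) @ 0^' --> L.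
  apply/cvgrPdist_le => e e0; have [del del0 phi_del] := phi_diff e e0.
  near=> h.
  have h0 : h != 0 by near: h; exact: nbhs_dnbhs_neq.
  have h_del : `|h| < del by near: h; exact: dnbhs0_lt.
  rewrite /= /shift /= [h *: 1]mulr1 [h + s]addrC -[_ *: _]/(_ * _).
  have -> : L - h^-1 * (phi (s + h) - phi s) = - h^-1 * (phi (s + h) - phi s - h * L).
    by field.
  rewrite normrM normrN normfV ler_pdivrMl ?normr_gt0 // mulrC (mulrC L) (mulrC `|h|).
  exact: phi_del.
apply: DeriveDef; first by apply/cvg_ex; exists L.
exact: cvg_lim quot_cvg.
Unshelve. all: by end_near. Qed.

Variable n : nat.
Implicit Types (f : 'rV[R]_n -> R) (Df : 'rV[R]_n -> 'rV[R]_n) (x h : 'rV[R]_n).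

Lemma is_derive_along_line f Df x h s :
  (forall y, has_grad f (Df y) y) ->
  is_derive s (1 : R) (fun s => f (x + s *: h)) (dotv (Df (x + s *: h)) h).
Proof.
move=> f_grad; apply: is_derive_eps_delta => e e0.
set y := x + s *: h.
have eps_gt0 : 0 < e / (enorm h + 1) by rewrite divr_gt0 // ltr_wpDl ?enorm_ge0.
have [del [del0 f_del]] := f_grad y _ eps_gt0.
exists (del / (enorm h + 1)) => [|u u_lt]; first by rewrite divr_gt0 // ltr_wpDl ?enorm_ge0.
have yuh : y + u *: h - y = u *: h by rewrite addrC addKr.
have uh_lt : enorm (y + u *: h - y) < del.
  rewrite yuh enormZ; apply: le_lt_trans (_ : `|u| * (enorm h + 1) < del).
    by rewrite ler_wpM2l // lerDl.
  by rewrite -ltr_pdivlMr // ltr_wpDl ?enorm_ge0.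
have := f_del _ uh_lt; rewrite yuh enormZ dotvZr scalerDl addrA -/y => /le_trans; apply.
rewrite -mulrA; apply: ler_wpM2l; first exact: ltW.
rewrite mulrCA; apply: ler_piMr => //.
by rewrite mulrC ler_pdivrMr ?ltr_wpDl ?enorm_ge0 // mul1r lerDl.
Qed.

Lemma C2_taylor2 f Df D2f x : C2 f Df D2f ->
  forall eps, 0 < eps -> exists2 del, 0 < del & forall h, enorm h < del ->
  `|f (x + h) - f x - dotv (Df x) h - 2^-1 * qform (D2f x) h| <= eps * enorm h ^+ 2.
Proof.
move=> [f_grad [Df_jac _]] eps eps0; have [del [del0 Df_del]] := Df_jac x eps eps0.
exists del => // h h_lt.
set c := dotv (Df x) h; set q := qform (D2f x) h.
pose rho s := f (x + s *: h) - s * c - 2^-1 * s ^+ 2 * q.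
pose drho s := dotv (Df (x + s *: h)) h - c - s * q.
have rho_deriv s : is_derive s (1 : R) rho (drho s).
  have := is_derive_along_line x h s f_grad.
  have -> : rho = (fun s => f (x + s *: h)) - ( *%R^~ c) - (fun s => 2^-1 * q * s ^+ 2).
    by apply/funext => t; rewrite !fctE mulrAC.
  move=> ?; apply: is_derive_eq; rewrite scaler0 add0r.
  change (dotv (Df (x + s *: h)) h - c * 1 - 2^-1 * q * (s * 1 + s * 1) = drho s).
  by rewrite /drho; field.
have rho_cont : {within `[0, 1], continuous rho}.
  by apply: derivable_within_continuous => s _; exact: ex_derive.
have [s s01 rho_mvt] := MVT ltr01 (fun s _ => rho_deriv s) rho_cont.
have /andP [s_gt0 s_lt1] : 0 < s < 1 by rewrite in_itv /= in s01.
have -> : f (x + h) - f x - c - 2^-1 * q = rho 1 - rho 0.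
  by rewrite /rho scale1r scale0r addr0; field.
have -> : rho 1 - rho 0 = dotv (Df (x + s *: h) - Df x - (s *: h) *m D2f x) h.
  by rewrite rho_mvt subr0 mulr1 /drho !dotvBl -scalemxAl dotvZl.
have xsh : x + s *: h - x = s *: h by rewrite addrC addKr.
have sh_lt : enorm (x + s *: h - x) < del.
  rewrite xsh enormZ gtr0_norm //; apply: le_lt_trans h_lt.
  by rewrite ler_piMl ?enorm_ge0 // ltW.
have := Df_del _ sh_lt; rewrite xsh enormZ gtr0_norm // => Df_sh.
apply: (le_trans (cauchy_schwarz _ _)).
apply: (le_trans (ler_wpM2r (enorm_ge0 h) Df_sh)).
rewrite expr2 mulrA -!mulrA; apply: ler_wpM2l; first exact: ltW.
by apply: ler_piMl; rewrite ?mulr_ge0 ?enorm_ge0 ?ltW.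
Qed.

End Taylor.

Section DirectionalOptimality.
Variables (R : realType) (n : nat).
Implicit Types (f : 'rV[R]_n -> R) (t : nat -> R) (v : nat -> 'rV[R]_n) (x d : 'rV[R]_n).

Lemma C2_taylor2_cvg f Df D2f x t v d : C2 f Df D2f ->
  t @ \oo --> 0 -> v @ \oo --> d ->
  (fun k => (f (x + t k *: v k) - f x - t k * dotv (Df x) (v k)
             - 2^-1 * t k ^+ 2 * qform (D2f x) (v k)) / t k ^+ 2) @ \oo --> 0.
Proof.
move=> fC2 t0 vd; apply/cvgr0Pnorm_le => e e0.
set D := enorm d ^+ 2 + 1.
have D_gt0 : 0 < D by rewrite ltr_wpDl ?sqr_ge0.
have [del del0 taylor] := C2_taylor2 x fC2 (divr_gt0 e0 D_gt0).
have tv0 : (fun k => `|t k| * enorm (v k)) @ \oo --> 0.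
  rewrite -(mul0r (enorm d)) -(@normr0 _ R).
  by apply: cvgM; [exact: cvg_norm | exact: cvg_enorm].
have v2 : (fun k => enorm (v k) ^+ 2) @ \oo --> enorm d ^+ 2.
  by rewrite expr2; under eq_fun do rewrite expr2; apply: cvgM; exact: cvg_enorm.
have tv_small : \forall k \near \oo, `|t k| * enorm (v k) < del.
  exact: cvgr_lt _ tv0 _ del0.
have v_bounded : \forall k \near \oo, enorm (v k) ^+ 2 < D.
  by apply: cvgr_lt _ v2 _ _; rewrite ltrDl.
near=> k.
have [->|tk0] := eqVneq (t k) 0; first by rewrite expr0n /= invr0 mulr0 normr0 ltW.
have tvk : enorm (t k *: v k) < del by rewrite enormZ; near: k.
have := taylor _ tvk; rewrite dotvZr qformZ enormZ exprMn real_normK ?num_real //.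
rewrite mulrA => rem_le.
have t2_gt0 : 0 < t k ^+ 2 by rewrite lt_def sqrf_eq0 tk0 sqr_ge0.
rewrite normrM normfV [`|t k ^+ 2|]ger0_norm ?sqr_ge0 // ler_pdivrMr //.
apply: (le_trans rem_le).
have -> : e / D * (t k ^+ 2 * enorm (v k) ^+ 2) = e * t k ^+ 2 * (enorm (v k) ^+ 2 / D).
  by ring.
apply: ler_piMr; first by rewrite mulr_ge0 ?ltW.
by rewrite ler_pdivrMr // mul1r ltW //; near: k.
Unshelve. all: by end_near. Qed.

Lemma Vdir_eventually (rho del : R) d t v : 0 < rho -> 0 < del ->
  pos_to0 t -> v @ \oo --> d ->
  \forall k \near \oo, Vdir rho del d (t k *: v k).
Proof.
move=> rho0 del0 [t_gt0 t0] vd.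
have tv0 : (fun k => t k * enorm (v k)) @ \oo --> 0.
  by rewrite -(mul0r (enorm d)); apply: cvgM => //; exact: cvg_enorm.
have angle_small : \forall k \near \oo,
    enorm (enorm d *: v k - enorm (v k) *: d) <= rho * enorm (v k) * enorm d.
  have [d0|d_neq0] := eqVneq (enorm d) 0.
    by near=> k; rewrite d0 mulr0 scale0r sub0r -scaleNr enormZ d0 mulr0.
  have d_gt0 : 0 < enorm d by rewrite lt_def d_neq0 enorm_ge0.
  have gap : (fun k => rho * enorm (v k) * enorm d
                     - enorm (enorm d *: v k - enorm (v k) *: d)) @ \oo
             --> rho * enorm d * enorm d - enorm (enorm d *: d - enorm d *: d).
    apply: cvgB.
      by apply: cvgM; [apply: cvgM; [exact: cvg_cst | exact: cvg_enorm] | exact: cvg_cst].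
    apply: cvg_enorm; apply: cvgB; apply: cvgZ => //.
    - exact: cvg_cst.
    - exact: cvg_enorm.
    - exact: cvg_cst.
  rewrite subrr enorm0 subr0 in gap.
  apply: filterS (cvgr_gt _ gap _ (mulr_gt0 (mulr_gt0 rho0 d_gt0) d_gt0)) => k.
  by rewrite subr_gt0 => /ltW.
near=> k; have tk_gt0 := t_gt0 k.
rewrite /Vdir /= enormZ gtr0_norm //; split.
  by apply: ltW; near: k; exact: cvgr_lt _ tv0 _ del0.
rewrite scalerA [enorm d * t k]mulrC -!scalerA -scalerBr enormZ gtr0_norm //.
rewrite !mulrA [rho * t k]mulrC -!mulrA ler_pM2l // !mulrA; near: k; exact: angle_small.
Unshelve. all: by end_near. Qed.

Lemma local_opt_dir_eventually f (C : set 'rV[R]_n) xbar d t v :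
  local_opt_dir f C xbar d -> pos_to0 t -> v @ \oo --> d ->
  (forall k, C (xbar + t k *: v k)) ->
  \forall k \near \oo, f xbar <= f (xbar + t k *: v k).
Proof.
move=> [_ [rho [del [rho0 [del0 opt]]]]] t_pos vd Ck.
apply: filterS (Vdir_eventually rho0 del0 t_pos vd) => k Vk.
by apply: opt => //; rewrite addrC addKr.
Qed.

Lemma local_opt_dir_second_order f Df D2f (C : set 'rV[R]_n) xbar d t r w_ w (c : R) :
  C2 f Df D2f -> local_opt_dir f C xbar d -> dotv (Df xbar) d = 0 ->
  pos_to0 t -> pos_to0 r -> (fun k => t k / r k) @ \oo --> c -> w_ @ \oo --> w ->
  (forall k, C (xbar + t k *: d + (2^-1 * t k * r k) *: w_ k)) ->
  0 <= dotv (Df xbar) w + c * qform (D2f xbar) d.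
Proof.
move=> fC2 opt Gd t_pos [r_gt0 r0] tr_c ww Ck.
set G := Df xbar; set H := D2f xbar.
pose v k := d + (2^-1 * r k) *: w_ k.
have vd : v @ \oo --> d.
  have : v @ \oo --> d + (2^-1 * 0) *: w.
    by apply: cvgD; [exact: cvg_cst | apply: cvgZ => //; apply: cvgM => //; exact: cvg_cst].
  by rewrite mulr0 scale0r addr0.
have Cv k : C (xbar + t k *: v k).
  by rewrite scalerDr scalerA addrA mulrCA mulrA; exact: Ck.
pose e k := (f (xbar + t k *: v k) - f xbar - t k * dotv G (v k)
             - 2^-1 * t k ^+ 2 * qform H (v k)) / t k ^+ 2.
have e0 : e @ \oo --> 0 := C2_taylor2_cvg xbar fC2 t_pos.2 vd.
(* Dividing [f (xbar + t k *: v k) - f xbar >= 0] by [t k * r k / 2] gives [s k >= 0]. *)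
pose s k := dotv G (w_ k) + t k / r k * (qform H (v k) + 2 * e k).
have s_cvg : s @ \oo --> dotv G w + c * (qform H d + 2 * 0).
  apply: cvgD; first by apply: cvg_dotv => //; exact: cvg_cst.
  apply: cvgM => //; apply: cvgD; first exact: cvg_qform.
  by apply: cvgM => //; exact: cvg_cst.
rewrite mulr0 addr0 in s_cvg; apply: (cvgr_to_ge s_cvg).
apply: filterS (local_opt_dir_eventually opt t_pos vd Cv) => k.
have tk_gt0 := t_pos.1 k; have rk_gt0 := r_gt0 k.
have Gv : dotv G (v k) = 2^-1 * r k * dotv G (w_ k).
  by rewrite dotvDr dotvZr Gd add0r.
have -> : s k = 2 / (t k * r k) * (f (xbar + t k *: v k) - f xbar).
  rewrite /s /e Gv; set F := f _; set q := qform H _.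
  by field; rewrite !gt_eqF.
by rewrite -subr_ge0 => ?; rewrite mulr_ge0 // divr_ge0 // ltW // mulr_gt0.
Qed.

End DirectionalOptimality.

Section SecondOrderConditions.
Variables (R : realType) (n : nat) (f : 'rV[R]_n -> R).
Variables (Df : 'rV[R]_n -> 'rV[R]_n) (D2f : 'rV[R]_n -> 'M[R]_n).
Variables (C : set 'rV[R]_n) (xbar d : 'rV[R]_n).
Hypotheses (fC2 : C2 f Df D2f) (opt : local_opt_dir f C xbar d).
Hypothesis (Gd : dotv (Df xbar) d = 0).

Lemma tangent2_asym_grad_ge0 w : tangent2_asym C xbar d w -> 0 <= dotv (Df xbar) w.
Proof.
move=> [t [r [w_ [t_pos [r_pos [tr0 [ww Ck]]]]]]].
by have := local_opt_dir_second_order fC2 opt Gd t_pos r_pos tr0 ww Ck; rewrite mul0r addr0.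
Qed.

Lemma tangent2_second_order_ge0 w :
  tangent2 C xbar d w -> 0 <= dotv (Df xbar) w + qform (D2f xbar) d.
Proof.
move=> [t [w_ [t_pos [ww Ck]]]].
have tt1 : (fun k => t k / t k) @ \oo --> (1 : R).
  have -> : (fun k => t k / t k) = fun=> 1.
    by apply/funext => k; rewrite divff // gt_eqF // t_pos.1.
  exact: cvg_cst.
have Ck' k : C (xbar + t k *: d + (2^-1 * t k * t k) *: w_ k) by rewrite -mulrA -expr2.
by have := local_opt_dir_second_order fC2 opt Gd t_pos t_pos tt1 ww Ck'; rewrite mul1r.
Qed.

End SecondOrderConditions.

Section SupportFunction.
Variables (R : realType) (n m : nat).
Variables (G : 'rV[R]_n) (lam : 'rV[R]_m) (J : 'M[R]_(n, m)).
Hypothesis stationary : G + lam *m J^T = 0.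

Lemma dotv_mulmx_stationary w : dotv lam (w *m J) = - dotv G w.
Proof.
rewrite dotvC dotv_mulmx.
have -> : lam *m J^T = - G by apply/eqP; rewrite -addr_eq0 addrC stationary.
by rewrite dotvC dotvNl.
Qed.

Lemma support_fun_image_le0 (S : set 'rV[R]_n) :
  (forall w, S w -> 0 <= dotv G w) -> (support_fun [set w *m J | w in S] lam <= 0)%E.
Proof.
move=> S_ge0; apply/ereal_supP => _ [_ [w Sw <-] <-].
by rewrite lee_fin dotv_mulmx_stationary oppr_le0 S_ge0.
Qed.

Lemma EFin_subKr (c : R) (x : \bar R) : (c%:E - (c%:E - x))%E = x.
Proof. by case: x => [r| |] //=; rewrite -EFinD opprB addrC subrK. Qed.

Lemma ereal_sup_EFinB (c : R) (S : set (\bar R)) :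
  ereal_sup [set (c%:E - x)%E | x in S] = (c%:E - ereal_inf S)%E.
Proof.
apply/le_anti/andP; split.
  apply/ereal_supP => _ [x Sx <-]; apply: leeB => //; exact: ereal_inf_lbound.
rewrite -[X in (_ <= X)%E](EFin_subKr c); apply: leeB => //.
apply/ereal_infP => x Sx; rewrite -[X in (_ <= X)%E](EFin_subKr c).
by apply: leeB => //; apply: ereal_sup_ubound; exists x.
Qed.

Lemma support_fun_affine_image (S : set 'rV[R]_n) (b : 'rV[R]_m) (a : R) :
  support_fun [set w *m J + b | w in S] lam =
  ((a + dotv lam b)%:E - ereal_inf [set (dotv G w + a)%:E | w in S])%E.
Proof.
rewrite -ereal_sup_EFinB /support_fun; congr ereal_sup.
apply/seteqP; split => _ [_ [w Sw <-] <-].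
  exists (dotv G w + a)%:E; first by exists w.
  by rewrite -EFinB dotvDr dotv_mulmx_stationary; congr EFin; ring.
exists (w *m J + b); first by exists w.
by rewrite -EFinB dotvDr dotv_mulmx_stationary; congr EFin; ring.
Qed.

End SupportFunction.

Unset Implicit Arguments.

Theorem theorem4p2 (R : realType) (n m : nat)
  (f : 'rV[R]_n -> R) (gradf : 'rV[R]_n -> 'rV[R]_n) (hessf : 'rV[R]_n -> 'M[R]_n)
  (g : 'rV[R]_n -> 'rV[R]_m) (Jg : 'rV[R]_n -> 'M[R]_(n, m))
  (Hg : 'I_m -> 'rV[R]_n -> 'M[R]_n)
  (K : set 'rV[R]_m) (xbar d : 'rV[R]_n) :
  C2 f gradf hessf ->
  C2map g Jg Hg ->
  closed K ->
  let C := g @^-1` K in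
  tangent_cone C xbar d ->
  local_opt_dir f C xbar d ->
  dotv (gradf xbar) d = 0 ->
  forall lam : 'rV[R]_m,
    gradf xbar + lam *m (Jg xbar)^T = 0 ->
    let Theta := [set w *m Jg xbar | w in tangent2_asym C xbar d] in
    let Omega := [set w *m Jg xbar + \row_i qform (Hg i xbar) d
                  | w in tangent2 C xbar d] in
    let alpha := ereal_inf [set (dotv (gradf xbar) w + qform (hessf xbar) d)%:E
                            | w in tangent2 C xbar d] in
    (support_fun Theta lam <= 0)%E /\
    ((qform (hessf xbar) d + \sum_(i < m) lam 0 i * qform (Hg i xbar) d)%:E
       - support_fun Omega lam = alpha)%E /\
    (0 <= alpha)%E.
Proof.
move=> fC2 _ _ C _ opt Gd lam stationary Theta Omega alpha.
split.
  apply: support_fun_image_le0 stationary _ _ => w.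
  exact: (tangent2_asym_grad_ge0 fC2 opt Gd).
split; last first.
  apply/ereal_infP => _ [w Tw <-]; rewrite lee_fin.
  exact: (tangent2_second_order_ge0 fC2 opt Gd).
rewrite /Omega (support_fun_affine_image stationary _ _ (qform (hessf xbar) d)).
have -> : dotv lam (\row_i qform (Hg i xbar) d) = \sum_(i < m) lam 0 i * qform (Hg i xbar) d.
  by rewrite dotvE; apply: eq_bigr => i _; rewrite mxE.
exact: EFin_subKr.
Qed.
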